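(* Let $V=\{v_1,\dots,v_k\}$ be an amenable collection of vectors subordinate to a $\mathbb{Q}$-nef partition $E_1,\dots,E_{k+1}$ of a complete fan $\Sigma$ in $M_\mathbb{R}$. Then $\mathrm{span}_\mathbb{Z}(v_1,\dots,v_k)$ is a saturated sublattice of $N$. In particular, there is a basis of $N$ containing $v_1,\dots,v_k$.
   Context: $M$ lattice of rank $n$, $N=\mathrm{Hom}(M,\mathbb{Z})$; $\Sigma$ complete fan of strictly convex rational cones in $M_\mathbb{R}$, $\Sigma[1]\subset M$ its primitive ray generators. A $\mathbb{Q}$-nef partition is an ordered partition $\Sigma[1]=E_1\sqcup\dots\sqcup E_{k+1}$ (with convex $\Sigma$-piecewise linear rational functions $\varphi_i$, $\varphi_i(\rho)=\delta_{ij}$ for $\rho\in E_j$). An amenable collection subordinate to it is $V=\{v_1,\dots,v_k\}\subset N$ with $\langle v_i,\rho\rangle=-1$ for $\rho\in E_i$, $\langle v_i,\rho\rangle\ge0$ for $\rho\in E_j$ with $i<j\le k+1$, and $\langle v_i,\rho\rangle=0$ for $\rho\in E_j$ with $j<i$. *)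

From mathcomp Require Import all_boot all_order all_algebra.
From mathcomp Require Import reals.
Set Implicit Arguments. Unset Strict Implicit. Unset Printing Implicit Defensive.
Import Order.TTheory GRing.Theory Num.Theory.
Local Open Scope ring_scope.

(* Conventions: M = Z^n (row vectors 'rV[int]_n), N = Hom(M,Z) = Z^n with the
   standard pairing; M_R = 'rV[R]_n for a real number type R. *)

Section Toric.
Variables (R : realType) (n : nat).

Definition pair (u m : 'rV[int]_n) : int := \sum_(i < n) u 0 i * m 0 i.

Definition pairR (u x : 'rV[R]_n) : R := \sum_(i < n) u 0 i * x 0 i.

Definition toR (m : 'rV[int]_n) : 'rV[R]_n := map_mx (fun z : int => z%:~R) m.

Definition cone (S : seq 'rV[int]_n) (x : 'rV[R]_n) : Prop :=
  exists c : 'I_(size S) -> R,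
    (forall i, 0 <= c i) /\ x = \sum_(i < size S) c i *: toR (S`_i).

Definition strictly_convex (C : 'rV[R]_n -> Prop) : Prop :=
  forall x, C x -> C (- x) -> x = 0.

Definition face_of (F C : 'rV[R]_n -> Prop) : Prop :=
  exists u : 'rV[R]_n, (forall x, C x -> 0 <= pairR u x) /\
    (forall x, F x <-> (C x /\ pairR u x = 0)).

Definition is_fan (Sigma : seq (seq 'rV[int]_n)) : Prop :=
  [/\ forall s, s \in Sigma -> strictly_convex (cone s),
      forall s (F : 'rV[R]_n -> Prop), s \in Sigma -> face_of F (cone s) ->
        exists2 t, t \in Sigma & forall x, F x <-> cone t x
    & forall s t, s \in Sigma -> t \in Sigma ->
        face_of (fun x => cone s x /\ cone t x) (cone s) /\
        face_of (fun x => cone s x /\ cone t x) (cone t)].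

Definition is_complete_fan (Sigma : seq (seq 'rV[int]_n)) : Prop :=
  is_fan Sigma /\ forall x : 'rV[R]_n, exists2 s, s \in Sigma & cone s x.

Definition primitive (r : 'rV[int]_n) : Prop :=
  r != 0 /\ forall (c : int) (w : 'rV[int]_n), r = c *: w -> `|c| = 1.

Definition is_ray (Sigma : seq (seq 'rV[int]_n)) (rho : 'rV[int]_n) : Prop :=
  primitive rho /\ exists2 s, s \in Sigma & forall x, cone s x <-> cone [:: rho] x.

Definition piecewise_linear_rat (Sigma : seq (seq 'rV[int]_n))
  (phi : 'rV[R]_n -> R) : Prop :=
  forall s, s \in Sigma -> exists m : 'rV[rat]_n,
    forall x, cone s x -> phi x = \sum_(i < n) ratr (m 0 i) * x 0 i.

Definition convex_fun (phi : 'rV[R]_n -> R) : Prop :=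
  forall (x y : 'rV[R]_n) (t : R), 0 <= t -> t <= 1 ->
    phi (t *: x + (1 - t) *: y) <= t * phi x + (1 - t) * phi y.

(* Q-nef partition Sigma[1] = E_1 |_| ... |_| E_{k+1}: the part containing a ray rho
   is E rho : 'I_k.+1 (index j stands for E_{j+1}); parts are nonempty. *)
Definition Qnef_partition (Sigma : seq (seq 'rV[int]_n)) (k : nat)
  (E : 'rV[int]_n -> 'I_k.+1) : Prop :=
  (forall j : 'I_k.+1, exists rho, is_ray Sigma rho /\ E rho = j) /\
  exists phi : 'I_k.+1 -> 'rV[R]_n -> R,
    forall i : 'I_k.+1,
      [/\ piecewise_linear_rat Sigma (phi i), convex_fun (phi i)
        & forall rho, is_ray Sigma rho -> phi i (toR rho) = (E rho == i)%:R].

(* amenable collection v_1,...,v_k (v i stands for v_{i+1}) subordinate to E *)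
Definition amenable (Sigma : seq (seq 'rV[int]_n)) (k : nat)
  (E : 'rV[int]_n -> 'I_k.+1) (v : 'I_k -> 'rV[int]_n) : Prop :=
  forall (i : 'I_k) rho, is_ray Sigma rho ->
    [/\ (nat_of_ord (E rho) == nat_of_ord i)%N -> pair (v i) rho = -1,
        (nat_of_ord i < E rho)%N -> 0 <= pair (v i) rho
      & (E rho < nat_of_ord i)%N -> pair (v i) rho = 0].

End Toric.

Definition in_span (n k : nat) (v : 'I_k -> 'rV[int]_n) (w : 'rV[int]_n) : Prop :=
  exists c : 'I_k -> int, w = \sum_(i < k) c i *: v i.

Definition saturated_span (n k : nat) (v : 'I_k -> 'rV[int]_n) : Prop :=
  forall (m : int) (w : 'rV[int]_n), m != 0 -> in_span v (m *: w) -> in_span v w.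

Definition is_Zbasis (n : nat) (b : 'I_n -> 'rV[int]_n) : Prop :=
  (forall w, in_span b w) /\
  (forall c : 'I_n -> int, \sum_(j < n) c j *: b j = 0 -> forall j, c j = 0).

From mathcomp Require Import all_boot all_order all_algebra.
From mathcomp Require Import reals.
Set Implicit Arguments.
Unset Strict Implicit.
Unset Printing Implicit Defensive.
Import Order.TTheory GRing.Theory Num.Theory.
Local Open Scope ring_scope.

(* Pick a ray rho_j in each part E_j, j <= k.  The amenability conditions make
   the k x k matrix (<v_i, rho_j>) triangular with diagonal -1, hence
   unimodular, so the matrix V with rows v_i has a right inverse B over Z.
   This gives saturation (if m w = c V then m (w B) = c, hence w = (w B) V),
   and, through the Smith normal form of V, a completion of the rows of V to a
   unimodular matrix. *)

Lemma unitmx_Zbasis q (W : 'M[int]_q) :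
  W \in unitmx -> is_Zbasis (fun i => row i W).
Proof.
move=> Wu; split.
  move=> w; exists (fun i => (w *m invmx W) 0 i).
  by rewrite -mulmx_sum_row mulmxKV.
move=> c cW0; have := congr1 (mulmx^~ (invmx W)) cW0.
have -> : \sum_j c j *: row j W = \row_j c j *m W.
  by rewrite mulmx_sum_row; apply: eq_bigr => j _; rewrite mxE.
rewrite mulmxK // mul0mx => /rowP c0 j.
by have := c0 j; rewrite !mxE.
Qed.

Lemma unimodular_completion k m (V : 'M[int]_(k, k + m)) (B : 'M[int]_(k + m, k)) :
  V *m B = 1%:M -> exists2 W : 'M[int]_(k + m), W \in unitmx & usubmx W = V.
Proof.
(* With V = L [D 0] S in Smith form, the right inverse forces L D to be
   unimodular, and then V stacked over the last m rows of S is
   block_mx (L D) 0 0 1 *m S. *)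
move=> VB; have [L Lu [S Su [d _ VE]]] := int_Smith_normal_form V.
pose D : 'M[int]_k := \matrix_(i, j) (d`_i *+ (i == j :> nat)).
have DE : (\matrix_(i, j) (d`_i *+ (i == j :> nat)) : 'M[int]_(k, k + m))
    = row_mx D 0.
  apply/matrixP => i j; rewrite -[j]splitK; case: (split j) => j' /=.
    by rewrite row_mxEl !mxE.
  rewrite row_mxEr !mxE /=; case: eqP => [ij|]; last by rewrite mulr0n.
  by have := ltn_ord i; rewrite ij ltnNge leq_addr.
have {}VE : V = L *m D *m usubmx S.
  by rewrite VE DE -[S in LHS]vsubmxK -mulmxA mul_row_col mul0mx addr0 mulmxA.
have LDu : L *m D \in unitmx.
  move: VB; rewrite VE -!mulmxA => /mulmx1_unit[_].
  by rewrite unitmx_mul => /andP[+ _]; rewrite unitmx_mul Lu.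
exists (col_mx V (dsubmx S)); last by rewrite col_mxKu.
have -> : col_mx V (dsubmx S) = block_mx (L *m D) 0 0 1%:M *m S.
  by rewrite -[S in RHS]vsubmxK mul_block_col !mul0mx mul1mx addr0 add0r -VE.
by rewrite unitmx_mul Su andbT unitmxE det_ublock det1 mulr1 -unitmxE.
Qed.

Lemma right_invertible_leq k n (V : 'M[int]_(k, n)) (B : 'M[int]_(n, k)) :
  V *m B = 1%:M -> (k <= n)%N.
Proof.
move=> /(congr1 (map_mx (intr : int -> rat))); rewrite map_mxM map_mx1 => VBQ.
have := mxrankM_maxl (map_mx (intr : int -> rat) V) (map_mx (intr : int -> rat) B).
by rewrite VBQ mxrank1 => /leq_trans; apply; apply: rank_leq_col.
Qed.

Section RightInvertibleFamily.
Variables (k n : nat) (v : 'I_k -> 'rV[int]_n) (B : 'M[int]_(n, k)).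
Hypothesis vB : (\matrix_i v i) *m B = 1%:M.

Lemma sum_scale_familyE (c : 'I_k -> int) :
  \sum_i c i *: v i = (\row_i c i) *m \matrix_i v i.
Proof. by rewrite mulmx_sum_row; apply: eq_bigr => i _; rewrite rowK mxE. Qed.

Lemma right_invertible_saturated : saturated_span v.
Proof.
move=> m w m0 [c]; rewrite sum_scale_familyE => mwE.
exists (fun i => (w *m B) 0 i); rewrite sum_scale_familyE.
have cE : \row_i c i = m *: (w *m B).
  by rewrite scalemxAl mwE -mulmxA vB mulmx1.
have -> : \row_i (w *m B) 0 i = w *m B by apply/rowP => j; rewrite mxE.
apply/rowP => j; apply: (mulfI m0).
have := congr1 (fun u : 'rV_n => u 0 j) mwE.
by rewrite cE -scalemxAl /= !mxE.
Qed.

Lemma right_invertible_basis_completion :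
  exists (b : 'I_n -> 'rV[int]_n) (f : 'I_k -> 'I_n),
    is_Zbasis b /\ injective f /\ forall i, b (f i) = v i.
Proof.
have [m nE] : exists m, n = (k + m)%N.
  by exists (n - k)%N; rewrite subnKC // (right_invertible_leq vB).
subst n; have [W Wu WE] := unimodular_completion vB.
exists (fun i => row i W), (lshift m); split; first exact: unitmx_Zbasis.
split; first exact: lshift_inj.
by move=> i; rewrite -(rowK v i) -WE; apply/rowP => j; rewrite !mxE.
Qed.

End RightInvertibleFamily.

Section TriangularPairing.
Variables (k n : nat) (v rho : 'I_k -> 'rV[int]_n).
Hypothesis pair_diag : forall i, pair (v i) (rho i) = -1.
Hypothesis pair_lower : forall i j : 'I_k, (j < i)%N -> pair (v i) (rho j) = 0.

Lemma pairing_mxE i j :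
  ((\matrix_i v i) *m (\matrix_j rho j)^T) i j = pair (v i) (rho j).
Proof. by rewrite !mxE; apply: eq_bigr => l _; rewrite !mxE. Qed.

Lemma triangular_pairing_right_inverse :
  exists B, (\matrix_i v i) *m B = 1%:M.
Proof.
set P := (\matrix_i v i) *m (\matrix_j rho j)^T.
have Pu : P \in unitmx.
  rewrite -unitmx_tr unitmxE det_trig; last first.
    by apply/is_trig_mxP => i j ij; rewrite mxE pairing_mxE pair_lower.
  rewrite (eq_bigr (fun _ => -1)) ?prodr_const ?unitrX ?unitrN1 // => i _.
  by rewrite mxE pairing_mxE pair_diag.
by exists ((\matrix_j rho j)^T *m invmx P); rewrite mulmxA mulmxV.
Qed.

End TriangularPairing.

Theorem proposition2p3 (R : realType) (n k : nat)
  (Sigma : seq (seq 'rV[int]_n)) (E : 'rV[int]_n -> 'I_k.+1)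
  (v : 'I_k -> 'rV[int]_n) :
  is_complete_fan R Sigma ->
  Qnef_partition R Sigma E ->
  amenable R Sigma E v ->
  saturated_span v /\
  exists (b : 'I_n -> 'rV[int]_n) (f : 'I_k -> 'I_n),
    is_Zbasis b /\ injective f /\ forall i, b (f i) = v i.
Proof.
move=> _ [parts_nonempty _] vE.
have [rho rhoE] :=
  fin_all_exists (fun i : 'I_k => parts_nonempty (widen_ord (leqnSn k) i)).
have [B vB] : exists B, (\matrix_i v i) *m B = 1%:M.
  apply: (@triangular_pairing_right_inverse _ _ v rho) => [i|i j ji].
    by have [rayi Ei] := rhoE i; have [-> //] := vE i _ rayi; rewrite Ei.
  by have [rayj Ej] := rhoE j; have [_ _ -> //] := vE i _ rayj; rewrite Ej.
split; first exact: right_invertible_saturated vB.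
exact: right_invertible_basis_completion vB.
Qed.
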